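(* Let $u, v \in \mathcal{L}_s$, where $u$ is either $A(E, x, S)$ or $B(E, S)$ and $v$ is either $A(F, y, K)$ or $B(F, K)$. Let $u'$ be $A(E \cup F, x, S)$ if $u = A(E,x,S)$ and $B(E\cup F, S)$ if $u = B(E,S)$. Then $\operatorname{imax}(u, v) =_{\mathcal{L}} \max(u', v)$.
   Context: $\operatorname{imax}\colon \mathbb{N}\times\mathbb{N}\to\mathbb{N}$ is defined by $\operatorname{imax}(i,0)=0$ and $\operatorname{imax}(i,j+1)=\max(i,j+1)$. $\mathcal{X}$ is a countable set of variables; a valuation is $\sigma\colon\mathcal{X}\to\mathbb{N}$. For finite $E\subseteq\mathcal{X}$, $x\in\mathcal{X}$, $S\in\mathbb{N}$, the sublevels $A(E,x,S)$ and $B(E,S)$ have values $[A(E,x,S)]_\sigma = 0$ if some $z\in E$ has $\sigma(z)=0$, and $\sigma(x)+S$ otherwise; $[B(E,S)]_\sigma=0$ if some $z\in E$ has $\sigma(z)=0$, and $S$ otherwise. $\mathcal{L}_s$ is the set of sublevels $A(E,x,S)$ with $x\in E$ and $B(E,S)$ with $S>0$. Values of $\max$ and $\operatorname{imax}$ of such expressions are computed pointwise: $[\max(a,b)]_\sigma=\max([a]_\sigma,[b]_\sigma)$, $[\operatorname{imax}(a,b)]_\sigma=\operatorname{imax}([a]_\sigma,[b]_\sigma)$. $t_1 =_{\mathcal{L}} t_2$ means $[t_1]_\sigma=[t_2]_\sigma$ for every valuation $\sigma$. *)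

From mathcomp Require Import all_boot.
Set Implicit Arguments. Unset Strict Implicit. Unset Printing Implicit Defensive.

Definition imax (i j : nat) : nat := if j is 0 then 0 else maxn i j.

(* Sublevels over a type X of variables; finite sets E are represented by
   finite sequences (only membership matters). *)
Inductive sublevel (X : Type) :=
| SA of seq X & X & nat
| SB of seq X & nat.
Arguments SA {X}. Arguments SB {X}.

Definition sl_set (X : Type) (u : sublevel X) : seq X :=
  match u with SA E _ _ => E | SB E _ => E end.

Definition sl_val (X : eqType) (sigma : X -> nat) (u : sublevel X) : nat :=
  if has (fun z => sigma z == 0) (sl_set u) then 0 else
  match u with SA _ x k => sigma x + k | SB _ k => k end.

Definition in_Ls (X : eqType) (u : sublevel X) : bool :=
  match u with SA E x _ => x \in E | SB _ k => 0 < k end.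

Definition sl_extend (X : Type) (u : sublevel X) (F : seq X) : sublevel X :=
  match u with SA E x k => SA (E ++ F) x k | SB E k => SB (E ++ F) k end.

From mathcomp Require Import all_boot.

Set Implicit Arguments.
Unset Strict Implicit.

(* A sublevel of L_s vanishes exactly when one of its guard variables does,
   so imax(u, v) is max(u, v) unless a variable of F is zero, in which case
   both sides vanish; enlarging the guard set of u by F accounts for that case.
   Only v needs to lie in L_s. *)

Section SublevelValues.

Variables (X : eqType) (sigma : X -> nat).

Definition vanishes_on (E : seq X) : bool := has (fun z => sigma z == 0) E.

Lemma sl_val_vanishes (u : sublevel X) :
  vanishes_on (sl_set u) -> sl_val sigma u = 0.
Proof. by rewrite /sl_val /vanishes_on => ->. Qed.

Lemma sl_val_extend (u : sublevel X) (F : seq X) :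
  sl_val sigma (sl_extend u F) = if vanishes_on F then 0 else sl_val sigma u.
Proof.
by case: u => [E x k|E k]; rewrite /sl_val /vanishes_on /= has_cat;
   case: (has _ E); case: (has _ F).
Qed.

Lemma sl_val_gt0 (v : sublevel X) :
  in_Ls v -> ~~ vanishes_on (sl_set v) -> 0 < sl_val sigma v.
Proof.
case: v => [F y K|F K] /= hv /negbTE nvan; rewrite /sl_val /= -/(vanishes_on F) nvan //.
have : sigma y != 0 by move/negbT/hasPn: nvan; apply.
by rewrite -lt0n => /leq_trans; apply; rewrite leq_addr.
Qed.

End SublevelValues.

Lemma imax_pos_maxn (i j : nat) : 0 < j -> imax i j = maxn i j.
Proof. by case: j. Qed.

Theorem proposition55 (X : countType) (u v : sublevel X) :
  in_Ls u -> in_Ls v ->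
  forall sigma : X -> nat,
    imax (sl_val sigma u) (sl_val sigma v) =
    maxn (sl_val sigma (sl_extend u (sl_set v))) (sl_val sigma v).
Proof.
move=> _ hv sigma; rewrite sl_val_extend.
case: ifP => [van | /negbT nvan].
  by rewrite (sl_val_vanishes van).
by rewrite imax_pos_maxn // sl_val_gt0.
Qed.
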